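(* Let $\eta\ge2$, let $P\in\mathfrak N_\eta$, let $R$ be a retract of $P$ which is a tower of nice sections, and let $R(\ell)=\{x,y,z\}$ be a 3-element level set of $R$ with $\lambda(x)\le\lambda(y)\le\lambda(z)$. Then $\lambda(z)-\lambda(x)\le\eta-1$, and in case of equality $\lambda(x)<\lambda(y)<\lambda(z)$.
   Context: All posets are finite; $h_P$ is the height; level sets $P(0)=\min P$, $P(k+1)=\min(P\setminus\bigcup_{i\le k}P(i))$; $A<B$ means $a<b$ for all $a\in A,b\in B$. A retract of $P$ is the image of an idempotent order-preserving self-map; $R(\ell)$ denotes the level sets of $R$ itself, while $\lambda(x)$ denotes the index $k$ with $x\in P(k)$ (the level in $P$). A section is either a 2-element antichain or a poset $P$ of height $h_P\ge1$ with carrier $\{c_{k,j}:k\in[0,h_P],j\in\{0,1,2\}\}$ such that: $c_{0,j}<\dots<c_{h_P,j}$ for each $j$; each $\{c_{k,0},c_{k,1},c_{k,2}\}$ is an antichain; $c_{k,i}<c_{\ell,j}\Rightarrow c_{k,i+1}<c_{\ell,j+1}$ (indices mod 3); and for no $k$ is $P(k)<P(k+1)$ with both 3-element. A section is nice if for all $x<y$: $\{z:z>x\}\not\subseteq\{z:z\ge y\}$ and $\{z:z<y\}\not\subseteq\{z:z\le x\}$. A tower of nice sections is an ordinal sum of nice sections. The horizon of a nice section $P$ of height $\ge2$ is the smallest $\eta\in\mathbb N$ with $P(k)<P(k+\eta)$ for all $k\in[0,h_P-\eta]$; $\mathfrak N_\eta$ is the class of nice sections of height $\ge2$ with horizon $\eta$.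 *)

From mathcomp Require Import all_boot all_order.
Set Implicit Arguments. Unset Strict Implicit. Unset Printing Implicit Defensive.
Import Order.Theory.
Local Open Scope order_scope.

(* A finite poset is a finPOrderType T; sub-posets (retracts, sections, ...)
   are subsets A : {set T} carrying the induced order. *)
Section Posets.
Context {d : Order.disp_t} {T : finPOrderType d}.

Definition set_lt (A B : {set T}) : bool :=
  [forall a in A, forall b in B, a < b].

Definition is_chain (C : {set T}) : bool :=
  [forall x in C, forall y in C, (x <= y) || (y <= x)].

Definition height (A : {set T}) : nat :=
  \max_(C : {set T} | (C \subset A) && is_chain C) #|C|.-1.

Definition minset (B : {set T}) : {set T} :=
  [set x in B | [forall y in B, ~~ (y < x)]].

(* rem_lev A k = A minus the union of the levels A(0..k-1) *)
Fixpoint rem_lev (A : {set T}) (k : nat) : {set T} :=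
  match k with
  | 0 => A
  | k'.+1 => rem_lev A k' :\: minset (rem_lev A k')
  end.

Definition level (A : {set T}) (k : nat) : {set T} := minset (rem_lev A k).

Definition antichain (A : {set T}) : bool :=
  [forall x in A, forall y in A, (x != y) ==> ~~ ((x <= y) || (y <= x))].

Definition is_section (A : {set T}) : Prop :=
  (#|A| = 2 /\ antichain A) \/
  (let h := height A in
   1 <= h /\
   (exists c : nat -> 'I_3 -> T,
     (forall k j, k <= h -> c k j \in A) /\
     (forall k j k' j', k <= h -> k' <= h -> c k j = c k' j' -> k = k' /\ j = j') /\
     (forall x, x \in A -> exists k j, k <= h /\ c k j = x) /\
     (forall k j, k < h -> c k j < c k.+1 j) /\
     (forall k, k <= h -> antichain [set c k j | j : 'I_3]) /\
     (forall k i l j, k <= h -> l <= h ->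
        c k i < c l j -> c k (ordS i) < c l (ordS j)) /\
     (forall k, ~ (set_lt (level A k) (level A k.+1) /\
                   #|level A k| = 3 /\ #|level A k.+1| = 3)))).

Definition is_nice (A : {set T}) : Prop :=
  forall x y, x \in A -> y \in A -> x < y ->
    ~ ([set z in A | x < z] \subset [set z in A | y <= z]) /\
    ~ ([set z in A | z < y] \subset [set z in A | z <= x]).

Definition nice_section (A : {set T}) : Prop := is_section A /\ is_nice A.

(* A is an ordinal sum S_0 (+) S_1 (+) ... of nice sections *)
Definition tower_of_nice_sections (A : {set T}) : Prop :=
  exists s : seq {set T},
    A = \bigcup_(S <- s) S /\
    (forall S, S \in s -> nice_section S) /\
    (forall i j, i < j < size s -> set_lt (nth set0 s i) (nth set0 s j)).

Definition horizon_cond (A : {set T}) (eta : nat) : bool :=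
  [forall k : 'I_(height A).+1,
     (k + eta <= height A)%N ==> set_lt (level A k) (level A (k + eta))].

Definition has_horizon (A : {set T}) (eta : nat) : Prop :=
  horizon_cond A eta /\ forall e, (e < eta)%N -> ~~ horizon_cond A e.

Definition in_N (eta : nat) (A : {set T}) : Prop :=
  nice_section A /\ 2 <= height A /\ has_horizon A eta.

Definition is_retract (R : {set T}) : Prop :=
  exists f : T -> T,
    (forall x y, x <= y -> f x <= f y) /\
    (forall x, f (f x) = f x) /\
    R = f @: [set: T].

End Posets.

From Pilot Require Import Defs.
From mathcomp Require Import all_boot all_order zify.
Set Implicit Arguments.
Unset Strict Implicit.
Unset Printing Implicit Defensive.
Import Order.Theory.
Local Open Scope order_scope.

(* If eta is the horizon of P, elements whose levels differ by at least eta are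
   comparable.  As a 3-element level of R is an antichain, this bounds the spread of
   its levels in P by eta - 1.  In the extreme case, an element u at level i and an
   element v at level i + eta - 1 satisfy: everything strictly above v is above u and
   everything strictly below u is below v.  If two of the three levels coincide, one
   element of the level of R relates in this way to both others.  That level is a row
   of one of the sections of R, and passing to an adjacent row yields an element below
   (or above) two elements of the other row outside its own column.  Together with the
   column chains this gives three comparabilities between the two rows whose column
   offsets are pairwise distinct mod 3; by the cyclic symmetry of sections all nine
   comparabilities follow, and sections exclude two such consecutive 3-element levels. *)

Section CyclicRelation.
Variable rel : 'I_3 -> 'I_3 -> Prop.
Hypothesis rel_ordS : forall i j, rel i j -> rel (ordS i) (ordS j).

Definition ord3_diff (i j : 'I_3) : nat := (j + 3 - i) %% 3.

Lemma val_iter_ordS n (i : 'I_3) : val (iter n (@ordS 3) i) = (i + n) %% 3.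
Proof.
elim: n => [|n IH] /=; first by rewrite addn0 modn_small.
by rewrite IH addnS -addn1 modnDml addn1.
Qed.

Lemma rel_ord3_diff i j i' j' : ord3_diff i j = ord3_diff i' j' -> rel i j -> rel i' j'.
Proof.
rewrite /ord3_diff => eq_diff rel_ij.
have rel_iter n : rel (iter n (@ordS 3) i) (iter n (@ordS 3) j).
  by elim: n => //= n IH; apply: rel_ordS.
have := ltn_ord i; have := ltn_ord j; have := ltn_ord i'; have := ltn_ord j' => *.
have -> : i' = iter (i' + 3 - i) (@ordS 3) i by apply/val_inj; rewrite val_iter_ordS /=; lia.
suff -> : j' = iter (i' + 3 - i) (@ordS 3) j by [].
by apply/val_inj; rewrite val_iter_ordS /=; lia.
Qed.

Lemma rel_total i1 j1 i2 j2 :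
  (forall i, rel i i) -> rel i1 j1 -> rel i2 j2 ->
  [/\ ord3_diff i1 j1 != 0, ord3_diff i2 j2 != 0 & ord3_diff i1 j1 != ord3_diff i2 j2] ->
  forall i j, rel i j.
Proof.
move=> rel_ii rel1 rel2 [d1 d2 d12] i j.
have : ord3_diff j j = ord3_diff i j \/ ord3_diff i1 j1 = ord3_diff i j \/
       ord3_diff i2 j2 = ord3_diff i j.
  move: d1 d2 d12; rewrite /ord3_diff.
  have := ltn_ord i; have := ltn_ord j; have := ltn_ord i1; have := ltn_ord j1.
  have := ltn_ord i2; have := ltn_ord j2; lia.
by case=> [|[]] /rel_ord3_diff; apply.
Qed.
End CyclicRelation.

Section Levels.
Context {disp : Order.disp_t} {T : finPOrderType disp}.
Implicit Types (A B : {set T}) (u v w : T).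

Lemma mem_minsetP B v :
  reflect (v \in B /\ forall u, u \in B -> ~~ (u < v)) (v \in Defs.minset B).
Proof.
rewrite inE; apply: (iffP andP) => [[-> /forall_inP //]|[-> min_v]].
by split=> //; apply/forall_inP.
Qed.

Lemma minset_sub B : Defs.minset B \subset B.
Proof. by apply/subsetP => v /mem_minsetP[]. Qed.

Lemma rem_lev_sub A k : rem_lev A k \subset A.
Proof. by elim: k => //= k; apply: subset_trans; apply: subsetDl. Qed.

Lemma rem_lev_subn A i j : (i <= j)%N -> rem_lev A j \subset rem_lev A i.
Proof.
move=> /subnK <-; elim: (j - i)%N => //= n.
by apply: subset_trans; apply: subsetDl.
Qed.

Lemma mem_level_rem_lev A k v : v \in level A k -> v \in rem_lev A k.
Proof. by move/mem_minsetP=> []. Qed.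

Lemma minset_le B v : v \in B -> exists2 u, u \in Defs.minset B & u <= v.
Proof.
move: {2}#|_| (leqnn #|[set w in B | w <= v]|) => n.
elim: n v => [|n IH] v size_below vB.
  have : v \in [set w in B | w <= v] by rewrite inE vB lexx.
  by move: size_below; rewrite leqn0 => /eqP/cards0_eq ->; rewrite inE.
have [v_min|] := boolP (v \in Defs.minset B); first by exists v.
rewrite inE vB /= negb_forall_in => /exists_inP[u uB]; rewrite negbK => u_lt_v.
have [|w w_min w_le_u] := IH u _ uB; last by exists w => //; rewrite (le_trans w_le_u) ?ltW.
rewrite -ltnS; apply: leq_trans size_below; apply: proper_card; apply/properP; split.
  by apply/subsetP => w; rewrite !inE => /andP[-> /le_trans->] //; rewrite ltW.
by exists v; rewrite !inE ?vB ?lexx // lt_geF.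
Qed.

Lemma minset_eq0 B : (Defs.minset B == set0) = (B == set0).
Proof.
apply/idP/idP => [|/eqP->]; last by rewrite -subset0 minset_sub.
apply: contraLR => /set0Pn[v /minset_le[u u_min _]]; apply/set0Pn; by exists u.
Qed.

Lemma rem_lev_card A k : (#|rem_lev A k| <= #|A| - k)%N.
Proof.
elim: k => [|k IH] /=; first by rewrite subn0.
have [->|rem_nz] := eqVneq (rem_lev A k) set0; first by rewrite set0D cards0.
rewrite subnS -ltnS; apply: leq_trans (leq_trans IH (leqSpred _)).
apply: proper_card; apply/properP; split; first exact: subsetDl.
have /set0Pn[m m_min] : Defs.minset (rem_lev A k) != set0 by rewrite minset_eq0.
by exists m; [exact: (subsetP (minset_sub _)) | rewrite inE m_min].
Qed.

Lemma rem_lev_card_set0 A : rem_lev A #|A| = set0.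
Proof. by apply/cards0_eq/eqP; rewrite -leqn0 -(subnn #|A|) rem_lev_card. Qed.

Lemma level_lt A i j u v : u \in level A i -> v \in level A j -> u < v -> (i < j)%N.
Proof.
move=> /mem_level_rem_lev u_rem /mem_minsetP[_ v_min] u_lt_v.
rewrite ltnNge; apply: contraL u_lt_v => le_ji; apply: v_min.
exact: (subsetP (rem_lev_subn A le_ji)) _ u_rem.
Qed.

Lemma level_le A i j v : (i <= j)%N -> v \in level A j ->
  exists2 u, u \in level A i & u <= v.
Proof. by move=> le_ij /mem_level_rem_lev /(subsetP (rem_lev_subn A le_ij)) /minset_le. Qed.

Lemma mem_some_level A v : v \in A -> exists k, v \in level A k.
Proof.
move=> vA; have ex_out : exists n, v \notin rem_lev A n.
  by exists #|A|; rewrite rem_lev_card_set0 inE.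
case: (ex_minnP ex_out) => [[|n]]; first by rewrite vA.
move=> /= v_out n_min; exists n; have v_rem : v \in rem_lev A n.
  by apply: contraT => /n_min; rewrite ltnn.
by move: v_out; rewrite inE v_rem andbT negbK.
Qed.

Lemma level_chain A j v : v \in level A j ->
  exists C : {set T}, [/\ C \subset A, is_chain C, #|C| = j.+1 & forall u, u \in C -> u <= v].
Proof.
elim: j v => [|j IH] v v_lev.
  exists [set v]; split; rewrite ?cards1 //.
  - by rewrite sub1set (subsetP (minset_sub _)).
  - by apply/forall_inP => a /set1P->; apply/forall_inP => b /set1P->; rewrite lexx.
  - by move=> u /set1P->.
have [u u_lev u_le_v] := level_le (leqnSn j) v_lev.
have u_lt_v : u < v.
  rewrite lt_neqAle u_le_v andbT; apply: contraTneq (mem_level_rem_lev v_lev) => <-.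
  by rewrite inE u_lev.
have [C [CA C_chain C_card C_le]] := IH u u_lev.
have vC : v \notin C by apply/negP => /C_le; rewrite lt_geF.
exists (v |: C); split.
- by rewrite subUset sub1set CA andbT (subsetP (rem_lev_sub A j.+1)) ?mem_level_rem_lev.
- apply/forall_inP => a /setU1P[->|aC]; apply/forall_inP => b /setU1P[->|bC].
  + by rewrite lexx.
  + by rewrite (le_trans (C_le b bC)) ?orbT.
  + by rewrite (le_trans (C_le a aC)).
  + by move/forall_inP: C_chain => /(_ a aC) /forall_inP; apply.
- by rewrite cardsU1 vC C_card.
- by move=> w /setU1P[->|/C_le/le_trans]; [rewrite lexx | apply].
Qed.

Lemma level_height A j v : v \in level A j -> (j <= height A)%N.
Proof.
case/level_chain=> C [CA C_chain C_card _].
by rewrite -[j]/(j.+1.-1) -C_card; apply: (leq_bigmax_cond C); rewrite CA.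
Qed.
End Levels.

Section OrdinalSums.
Context {disp : Order.disp_t} {T : finPOrderType disp}.
Implicit Types (A B C : {set T}) (u v w : T).

Lemma set_ltP B C : reflect (forall u v, u \in B -> v \in C -> u < v) (set_lt B C).
Proof.
apply: (iffP forall_inP) => [lt_BC u v uB vC|lt_BC u uB].
  by move/forall_inP: (lt_BC u uB); apply.
by apply/forall_inP => v; apply: lt_BC.
Qed.

Lemma set_ltSl B' B C : B' \subset B -> set_lt B C -> set_lt B' C.
Proof. by move=> /subsetP sB /set_ltP lt_BC; apply/set_ltP => u v /sB; apply: lt_BC. Qed.

Lemma minsetU B C : set_lt B C -> B != set0 -> Defs.minset (B :|: C) = Defs.minset B.
Proof.
move=> /set_ltP lt_BC /set0Pn[b bB]; apply/setP => v.
apply/mem_minsetP/mem_minsetP => [[/setUP[vB|vC] v_min]|[vB v_min]].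
- by split=> // u uB; apply: v_min; rewrite inE uB.
- by move: (v_min b); rewrite inE bB (lt_BC _ _ bB vC) => /(_ isT).
- split; first by rewrite inE vB.
  by move=> u /setUP[/v_min //|uC]; rewrite lt_gtF ?lt_BC.
Qed.

Lemma rem_lev_set0 k : rem_lev set0 k = set0 :> {set T}.
Proof. by elim: k => //= k ->; rewrite set0D. Qed.

Lemma rem_lev_set0_from B : exists N, forall k, (rem_lev B k == set0) = (N <= k)%N.
Proof.
have ex_empty : exists n, rem_lev B n == set0 by exists #|B|; rewrite rem_lev_card_set0.
case: (ex_minnP ex_empty) => N empty_N N_min; exists N => k.
apply/idP/idP => [/N_min //|/subnK <-].
by elim: (k - N)%N => //= n /eqP->; rewrite set0D.
Qed.

Lemma rem_levU B C N : set_lt B C ->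
  (forall k, (rem_lev B k == set0) = (N <= k)%N) ->
  forall k, rem_lev (B :|: C) k = rem_lev B k :|: rem_lev C (k - N).
Proof.
move=> lt_BC empty_B; elim=> //= k ->.
have [lt_kN|le_Nk] := ltnP k N; last first.
  have /eqP-> : rem_lev B k == set0 by rewrite empty_B.
  by rewrite !set0D !set0U subSn.
have -> : (k.+1 - N = 0)%N by apply/eqP; rewrite subn_eq0.
have -> : (k - N = 0)%N by apply/eqP; rewrite subn_eq0 ltnW.
rewrite minsetU ?empty_B -?ltnNge //; last exact: set_ltSl (rem_lev_sub B k) lt_BC.
rewrite setDUl; congr (_ :|: _); apply/setP => v; rewrite inE andb_idl // => vC.
apply: contraTN vC => /mem_minsetP[vB _].
by apply/negP => vC; move/set_ltP: lt_BC => /(_ v v (subsetP (rem_lev_sub B k) _ vB) vC); rewrite ltxx.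
Qed.

Lemma levelU B C : set_lt B C -> exists N, forall k,
  level (B :|: C) k = if (k < N)%N then level B k else level C (k - N).
Proof.
move=> lt_BC; have [N empty_B] := rem_lev_set0_from B; exists N => k.
rewrite /level (rem_levU lt_BC empty_B); case: ltnP => [lt_kN|le_Nk].
  have -> : (k - N = 0)%N by apply/eqP; rewrite subn_eq0 ltnW.
  rewrite minsetU ?empty_B -?ltnNge //; exact: set_ltSl (rem_lev_sub B k) lt_BC.
have /eqP-> : rem_lev B k == set0 by rewrite empty_B.
by rewrite set0U.
Qed.

Lemma level_bigcup (s : seq {set T}) l :
  (forall i j, (i < j < size s)%N -> set_lt (nth set0 s i) (nth set0 s j)) ->
  level (\bigcup_(S <- s) S) l != set0 ->
  exists2 S, S \in s & exists k, level (\bigcup_(S <- s) S) l = level S k.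
Proof.
elim: s l => [|S0 s IH] l lt_s; first by rewrite big_nil /level rem_lev_set0 minset_eq0 eqxx.
have lt_S0 : set_lt S0 (\bigcup_(S <- s) S).
  apply/set_ltP => u v uS0; rewrite bigcup_seq => /bigcupP[S Ss vS].
  have /set_ltP : set_lt (nth set0 (S0 :: s) 0) (nth set0 (S0 :: s) (index S s).+1).
    by apply: lt_s; rewrite /= ltnS index_mem Ss.
  by rewrite /= nth_index //; apply.
rewrite big_cons; have [N ->] := levelU lt_S0; case: ltnP => _ level_nz.
  by exists S0; [rewrite mem_head | exists l].
have [|S Ss [k ->]] := IH _ _ level_nz; first by move=> i j ij; apply: (lt_s i.+1 j.+1).
by exists S; [rewrite inE Ss orbT | exists k].
Qed.
End OrdinalSums.

Definition dominated {disp : Order.disp_t} {T : finPOrderType disp} (u v : T) : Prop :=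
  (forall w, v < w -> u < w) /\ (forall w, w < u -> w < v).

Section Grid.
Context {disp : Order.disp_t} {T : finPOrderType disp}.
Variables (S : {set T}) (h : nat) (c : nat -> 'I_3 -> T).
Hypothesis grid_mem : forall k j, (k <= h)%N -> c k j \in S.
Hypothesis grid_inj : forall k j k' j', (k <= h)%N -> (k' <= h)%N ->
  c k j = c k' j' -> k = k' /\ j = j'.
Hypothesis grid_surj : forall x, x \in S -> exists k j, (k <= h)%N /\ c k j = x.
Hypothesis grid_col_lt : forall k j, (k < h)%N -> c k j < c k.+1 j.
Hypothesis grid_row_antichain : forall k, (k <= h)%N -> antichain [set c k j | j : 'I_3].
Hypothesis grid_ordS : forall k i l j, (k <= h)%N -> (l <= h)%N ->
  c k i < c l j -> c k (ordS i) < c l (ordS j).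
Hypothesis grid_levels_not_full : forall k,
  ~ (set_lt (level S k) (level S k.+1) /\ #|level S k| = 3 /\ #|level S k.+1| = 3).

Definition row k := [set c k j | j : 'I_3].
Definition rows_from k := [set x | [exists i : 'I_h.+1, (k <= i)%N && (x \in row i)]].

Lemma mem_rowP k x : reflect (exists j, x = c k j) (x \in row k).
Proof. by apply: (iffP imsetP) => [[j _ ->]|[j ->]]; exists j. Qed.

Lemma mem_row k j : c k j \in row k.
Proof. by apply/mem_rowP; exists j. Qed.

Lemma rows_fromP k x :
  reflect (exists i j, [/\ (k <= i)%N, (i <= h)%N & x = c i j]) (x \in rows_from k).
Proof.
rewrite inE; apply: (iffP existsP) => [[i /andP[ki /mem_rowP[j ->]]]|[i [j [ki ih ->]]]].
  by exists i, j; rewrite ki -ltnS ltn_ord.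
by exists (Ordinal (ih : (i < h.+1)%N)); rewrite ki; apply/mem_rowP; exists j.
Qed.

Lemma card_row k : (k <= h)%N -> #|row k| = 3.
Proof. by move=> kh; rewrite card_imset ?card_ord // => j j' /grid_inj[]. Qed.

Lemma grid_col_le k k' j : (k <= k' <= h)%N -> c k j <= c k' j.
Proof.
case/andP => /subnK <-; elim: (k' - k)%N => [|n IH] le_h; first exact: lexx.
exact: le_trans (IH (ltnW le_h)) (ltW (grid_col_lt j le_h)).
Qed.

Lemma grid_row_nlt k j j' : (k <= h)%N -> ~~ (c k j < c k j').
Proof.
move=> kh; have [<-|neq_j] := eqVneq j j'; first by rewrite ltxx.
have neq_c : c k j != c k j' by apply: contra_neq neq_j => /grid_inj[].
move/forall_inP: (grid_row_antichain kh) => /(_ _ (mem_row k j)) /forall_inP.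
by move=> /(_ _ (mem_row k j')); rewrite neq_c /= negb_or => /andP[/negP nle _];
  apply/negP => /ltW.
Qed.

Lemma grid_lt_row k k' j j' : (k <= h)%N -> (k' <= h)%N -> c k' j' < c k j -> (k' < k)%N.
Proof.
move=> kh k'h lt_c; rewrite ltnNge; apply: contraL lt_c => le_kk'.
apply: contraNN (grid_row_nlt j' j k'h) => /lt_le_trans; apply.
by rewrite grid_col_le // le_kk'.
Qed.

Lemma minset_rows_from k : (k <= h)%N -> Defs.minset (rows_from k) = row k.
Proof.
move=> kh; apply/setP => x; apply/mem_minsetP/mem_rowP.
  case=> /rows_fromP[i [j [ki ih ->]]] x_min; exists j.
  suff -> : i = k by [].
  apply/eqP; rewrite eqn_leq ki andbT leqNgt; apply/negP => lt_ki.
  have /x_min/negP : c k j \in rows_from k by apply/rows_fromP; exists k, j.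
  by apply; rewrite (lt_le_trans (grid_col_lt j (leq_trans lt_ki ih))) ?grid_col_le ?lt_ki.
case=> j ->; split; first by apply/rows_fromP; exists k, j.
move=> y /rows_fromP[i [j' [ki ih ->]]]; apply/negP => /(grid_lt_row kh ih).
by rewrite ltnNge ki.
Qed.

Lemma rows_from_gt k : (h < k)%N -> rows_from k = set0.
Proof.
move=> hk; apply/setP => x; rewrite in_set0; apply/negbTE/rows_fromP => -[i [j [ki ih _]]].
by move: (leq_trans hk (leq_trans ki ih)); rewrite ltnn.
Qed.

Lemma rem_lev_grid k : rem_lev S k = rows_from k.
Proof.
elim: k => [|k IH] /=.
  apply/setP => x; apply/idP/rows_fromP => [/grid_surj[i [j [ih <-]]]|[i [j [_ ih ->]]]].
    by exists i, j.
  exact: grid_mem.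
rewrite IH; have [kh|hk] := leqP k h; last by rewrite !rows_from_gt ?set0D // ltnW.
rewrite minset_rows_from //; apply/setP => x; rewrite inE.
apply/andP/rows_fromP => [[x_row /rows_fromP[i [j [ki ih ex]]]]|[i [j [ki ih ex]]]].
  exists i, j; split=> //; rewrite ltn_neqAle ki andbT.
  by apply: contraNneq x_row => ->; rewrite ex mem_row.
split; last by apply/rows_fromP; exists i, j; rewrite ltnW.
apply/mem_rowP => -[j' ex']; rewrite ex in ex'.
by have [ik _] := grid_inj ih kh ex'; rewrite ik ltnn in ki.
Qed.

Lemma level_grid t : level S t = if (t <= h)%N then row t else set0.
Proof.
rewrite /level rem_lev_grid; case: leqP => [th|ht]; first exact: minset_rows_from.
by rewrite rows_from_gt //; apply/eqP; rewrite minset_eq0.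
Qed.

Lemma grid_rows_not_full k : (k < h)%N -> ~ (forall i j, c k i < c k.+1 j).
Proof.
move=> kh full; apply: (@grid_levels_not_full k).
rewrite !level_grid kh ltnW // !card_row ?(ltnW kh) //; split=> //.
by apply/set_ltP => _ _ /mem_rowP[i ->] /mem_rowP[j ->].
Qed.

Lemma grid_not_two_crossings k i1 j1 i2 j2 : (k < h)%N ->
  c k i1 < c k.+1 j1 -> c k i2 < c k.+1 j2 ->
  [/\ ord3_diff i1 j1 != 0, ord3_diff i2 j2 != 0 & ord3_diff i1 j1 != ord3_diff i2 j2] ->
  False.
Proof.
move=> kh lt1 lt2 diffs; apply: (grid_rows_not_full kh).
apply: (@rel_total (fun i j => c k i < c k.+1 j) _ _ _ _ _ _ lt1 lt2 diffs).
- by move=> i j; apply: grid_ordS; rewrite ?(ltnW kh).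
- by move=> i; apply: grid_col_lt.
Qed.

Lemma grid_not_below_two k i j1 j2 : (k < h)%N -> [/\ i != j1, i != j2 & j1 != j2] ->
  c k i < c k.+1 j1 -> c k i < c k.+1 j2 -> False.
Proof.
move=> kh []; rewrite -!val_eqE /= => ij1 ij2 j12 lt1 lt2.
apply: (grid_not_two_crossings kh lt1 lt2); rewrite /ord3_diff.
have := ltn_ord i; have := ltn_ord j1; have := ltn_ord j2.
by split; apply/eqP; lia.
Qed.

Lemma grid_not_above_two k i j1 j2 : (k < h)%N -> [/\ i != j1, i != j2 & j1 != j2] ->
  c k j1 < c k.+1 i -> c k j2 < c k.+1 i -> False.
Proof.
move=> kh []; rewrite -!val_eqE /= => ij1 ij2 j12 lt1 lt2.
apply: (grid_not_two_crossings kh lt1 lt2); rewrite /ord3_diff.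
have := ltn_ord i; have := ltn_ord j1; have := ltn_ord j2.
by split; apply/eqP; lia.
Qed.

Lemma grid_adjacent_rows t : (0 < h)%N -> (t <= h)%N ->
  exists2 k, (k < h)%N & t = k \/ t = k.+1.
Proof.
move=> h_gt0 th; have [lt_th|le_ht] := ltnP t h; first by exists t; [|left].
by exists t.-1; [|right]; lia.
Qed.

Lemma grid_row_two_dominated t a b e : (0 < h)%N -> (t <= h)%N ->
  [/\ a != b, a != e & b != e] ->
  dominated (c t a) (c t e) -> dominated (c t b) (c t e) -> False.
Proof.
move=> h_gt0 th [ab ae be] [up_a down_a] [up_b down_b].
have [k kh t_k] := grid_adjacent_rows h_gt0 th.
suff [lt_a lt_b] : c k a < c k.+1 e /\ c k b < c k.+1 e.
  by apply: (grid_not_above_two kh _ lt_a lt_b); split; rewrite // eq_sym.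
case: t_k => ?; subst t.
- by split; [apply: up_a | apply: up_b]; apply: grid_col_lt.
- by split; [apply: down_a | apply: down_b]; apply: grid_col_lt.
Qed.

Lemma grid_row_two_dominating t a b e : (0 < h)%N -> (t <= h)%N ->
  [/\ a != b, a != e & b != e] ->
  dominated (c t a) (c t b) -> dominated (c t a) (c t e) -> False.
Proof.
move=> h_gt0 th neq [up_b down_b] [up_e down_e].
have [k kh t_k] := grid_adjacent_rows h_gt0 th.
suff [lt_b lt_e] : c k a < c k.+1 b /\ c k a < c k.+1 e.
  exact: grid_not_below_two kh neq lt_b lt_e.
case: t_k => ?; subst t.
- by split; [apply: up_b | apply: up_e]; apply: grid_col_lt.
- by split; [apply: down_b | apply: down_e]; apply: grid_col_lt.
Qed.
End Grid.

Lemma cards3_neq (T : finType) (u v w : T) :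
  #|[set u; v; w]| = 3 -> [/\ u != v, u != w & v != w].
Proof.
rewrite setUC !cardsU1 cards1 !inE.
case: (eqVneq u v) => uv; case: (eqVneq u w) => uw; case: (eqVneq v w) => vw;
  by subst; rewrite ?eqxx ?uv ?uw ?vw.
Qed.

Lemma section_level3_dominance {disp : Order.disp_t} {T : finPOrderType disp}
    (S : {set T}) t u v w :
  is_section S -> level S t = [set u; v; w] -> #|[set u; v; w]| = 3 ->
  ~ (dominated u w /\ dominated v w) /\ ~ (dominated u v /\ dominated u w).
Proof.
case=> [[card2 _]|/= [h_gt0 [c [cS [cinj [csurj [ccol [canti [cordS cfull]]]]]]]]] lev_t card3.
  have := subset_leq_card (subset_trans (minset_sub _) (rem_lev_sub S t)).
  by rewrite -/(level S t) lev_t card3 card2.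
move: lev_t; rewrite (level_grid cS cinj csurj ccol canti); case: leqP => th; last first.
  by move=> lev_t; move: card3; rewrite -lev_t cards0.
move=> row_t; have [uv uw vw] := cards3_neq card3.
have pos x : x \in [set u; v; w] -> exists j, x = c t j by rewrite -row_t => /mem_rowP.
have [a ua] : exists a, u = c t a by apply: pos; rewrite !inE eqxx.
have [b vb] : exists b, v = c t b by apply: pos; rewrite !inE eqxx orbT.
have [e we] : exists e, w = c t e by apply: pos; rewrite !inE eqxx !orbT.
subst u v w.
have neq : [/\ a != b, a != e & b != e].
  split; [move: uv | move: uw | move: vw]; by apply: contra_neq => ->.
split=> -[dom1 dom2].
- exact: (grid_row_two_dominated cS cinj csurj ccol canti cordS cfull h_gt0 th neq dom1 dom2).
- exact: (grid_row_two_dominating cS cinj csurj ccol canti cordS cfull h_gt0 th neq dom1 dom2).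
Qed.

Section Horizon.
Context {disp : Order.disp_t} {T : finPOrderType disp}.
Variable eta : nat.
Hypothesis horizon : horizon_cond [set: T] eta.

Lemma horizon_lt (u v : T) i j :
  u \in level [set: T] i -> v \in level [set: T] j -> (i + eta <= j)%N -> u < v.
Proof.
move=> u_i v_j le_ij; have [w w_lev w_le_v] := level_le le_ij v_j.
have le_jh := level_height v_j.
have lt_ih : (i < (height [set: T]).+1)%N by lia.
move/forallP: horizon => /(_ (Ordinal lt_ih)) /=.
rewrite (leq_trans le_ij le_jh) => /set_ltP lt_lev.
exact: lt_le_trans (lt_lev _ _ u_i w_lev) w_le_v.
Qed.

Lemma horizon_dominated (u v : T) i j :
  u \in level [set: T] i -> v \in level [set: T] j -> (i + eta <= j.+1)%N -> dominated u v.
Proof.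
move=> u_i v_j le_ij.
split=> w lt_w; have [m w_m] := mem_some_level (in_setT w).
- by apply: (horizon_lt u_i w_m); have := level_lt v_j w_m lt_w; lia.
- by apply: (horizon_lt w_m v_j); have := level_lt w_m u_i lt_w; lia.
Qed.
End Horizon.

Theorem lemma3p6 (d : Order.disp_t) (T : finPOrderType d) (eta : nat)
  (R : {set T}) (l : nat) (x y z : T) (lx ly lz : nat) :
  (2 <= eta)%N ->
  in_N eta [set: T] ->
  is_retract R ->
  tower_of_nice_sections R ->
  #|level R l| = 3 ->
  level R l = [set x; y; z] ->
  x \in level [set: T] lx ->
  y \in level [set: T] ly ->
  z \in level [set: T] lz ->
  (lx <= ly <= lz)%N ->
  (lz - lx <= eta - 1)%N /\
  (lz - lx = eta - 1 -> (lx < ly < lz)%N).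
Proof.
move=> eta_ge2 [_ [_ [horizon _]]] _ [s [-> [s_nice s_lt]]] card3 lev_R x_lx y_ly z_lz.
move=> /andP[le_xy le_yz].
have [S Ss [t lev_S]] : exists2 S, S \in s & exists t, level (\bigcup_(S <- s) S) l = level S t.
  by apply: level_bigcup; rewrite // -card_gt0 card3.
have card3' : #|[set x; y; z]| = 3 by rewrite -lev_R.
have [not_two_dominated not_two_dominating] :=
  section_level3_dominance (s_nice S Ss).1 (etrans (esym lev_S) lev_R) card3'.
have lt_lz : (lz < lx + eta)%N.
  have x_l : x \in level (\bigcup_(S <- s) S) l by rewrite lev_R !inE eqxx.
  have z_l : z \in level (\bigcup_(S <- s) S) l by rewrite lev_R !inE eqxx orbT.
  rewrite ltnNge; apply/negP => /(horizon_lt horizon x_lx z_lz) /(level_lt x_l z_l).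
  by rewrite ltnn.
split=> [|eq_eta]; first lia.
apply/andP; split; rewrite ltn_neqAle ?le_xy ?le_yz andbT; apply/eqP => eq_l.
- apply: not_two_dominated; split.
  + by apply: (horizon_dominated horizon x_lx z_lz); lia.
  + by apply: (horizon_dominated horizon y_ly z_lz); lia.
- apply: not_two_dominating; split.
  + by apply: (horizon_dominated horizon x_lx y_ly); lia.
  + by apply: (horizon_dominated horizon x_lx z_lz); lia.
Qed.
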